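(* Let $\Gamma$ be a typing environment, $u$ an identifier, $\vec T$ a tuple of types and $a_1,a_2$ attributes, and suppose the environment $\Gamma, u:[\vec T]^{a_1}, u:[\vec T]^{a_2}$ is consistent, i.e., it is derivable from some typing environment $\Gamma'$ that is a partial function by applying the structural rules. Then $\Gamma, u:[\vec T]^{a_1-1}, u:[\vec T]^{a_2-1}$ is derivable from the same environment $\Gamma'$ by applying the structural rules, and is therefore consistent.
   Context: Types: $T ::= [T_1,\dots,T_n]^{a} \mid \mathsf{Proc}$ (channel type carrying an $n$-tuple of values, with usage attribute $a$; and the type of process variables). Attributes: $a ::= \mathsf{aff}$ (affine) $\mid \mathsf{un}$ (unrestricted) $\mid \bullet_i$ (unique after $i$ steps, $i\in\mathbb N$). Identifiers $u,v$ range over channel names and variables; process variables $X$ are also given types. A typing environment is a finite multiset of assumptions $u:T$ (not a priori a partial function). Type splitting $T = T_1\circ T_2$ is given by: $[\vec T]^{\mathsf{un}} = [\vec T]^{\mathsf{un}}\circ[\vec T]^{\mathsf{un}}$; $\mathsf{Proc}=\mathsf{Proc}\circ\mathsf{Proc}$; $[\vec T]^{\bullet_i} = [\vec T]^{\mathsf{aff}}\circ[\vec T]^{\bullet_{i+1}}$ (nothing else splits). Subtyping is given by the rules $\bullet_i\le\bullet_{i+1}$, $\bullet_{i+1}\le\mathsf{un}$, $\mathsf{un}\le\mathsf{aff}$, and $[\vec T]^{a_1}\le[\vec T]^{a_2}$ whenever $a_1\le a_2$. The structural rules of the type system (for judgements $\Gamma\vdash P$) are: (Contraction) if $T=T_1\circ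 T_2$ and $\Gamma,u:T_1,u:T_2\vdash P$ then $\Gamma,u:T\vdash P$; (Weakening) if $\Gamma\vdash P$ then $\Gamma,u:T\vdash P$; (Subtyping) if $\Gamma,u:T_2\vdash P$ and $T_1\le T_2$ then $\Gamma,u:T_1\vdash P$; (Revision) if $\Gamma,u:[\vec T_2]^{\bullet_0}\vdash P$ then $\Gamma,u:[\vec T_1]^{\bullet_0}\vdash P$. An environment $\Delta$ is derivable from $\Gamma'$ by applying the structural rules if $\Delta$ arises from $\Gamma'$ by finitely many of the corresponding environment transformations (reading each rule from conclusion to premise): replacing $u:T$ by $u:T_1,u:T_2$ where $T=T_1\circ T_2$; removing an assumption; replacing $u:T_1$ by $u:T_2$ where $T_1\le T_2$; replacing $u:[\vec T_1]^{\bullet_0}$ by $u:[\vec T_2]^{\bullet_0}$. An environment is consistent if it is derivable in this way from an environment that is a partial function (at most one assumption per identifier). Usage decrement: for an environment $\Gamma$, $\Gamma, u:[\vec T]^{a-1}$ denotes $\Gamma$ if $a=\mathsf{aff}$; $\Gamma,u:[\vec T]^{\mathsf{un}}$ if $a=\mathsf{un}$; and $\Gamma,u:[\vec T]^{\bullet_i}$ if $a=\bullet_{i+1}$ (it is undefined for $a=\bullet_0$). *)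

From Stdlib Require Import List Permutation Relations.
Import ListNotations.

Inductive attr : Type :=
| Aff : attr
| Un : attr
| Bullet : nat -> attr.

Inductive ty : Type :=
| TChan : list ty -> attr -> ty
| TProc : ty.

Inductive tsplit : ty -> ty -> ty -> Prop :=
| split_un : forall Ts, tsplit (TChan Ts Un) (TChan Ts Un) (TChan Ts Un)
| split_proc : tsplit TProc TProc TProc
| split_bullet : forall Ts i,
    tsplit (TChan Ts (Bullet i)) (TChan Ts Aff) (TChan Ts (Bullet (S i))).

(* Generating rules of attribute subtyping (the structural rule may be
   applied repeatedly, so the reflexive-transitive closure is implicit). *)
Inductive attr_le : attr -> attr -> Prop :=
| le_bb : forall i, attr_le (Bullet i) (Bullet (S i))
| le_bun : forall i, attr_le (Bullet (S i)) Un
| le_unaff : attr_le Un Aff.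

Definition attr_sub : attr -> attr -> Prop := clos_refl_trans attr attr_le.

Inductive subty : ty -> ty -> Prop :=
| subty_chan : forall Ts a1 a2, attr_sub a1 a2 -> subty (TChan Ts a1) (TChan Ts a2).

(* Typing environments: finite multisets of assumptions, represented as lists
   considered up to permutation. *)
Definition env (I : Type) := list (I * ty).

(* One environment transformation (structural rule read conclusion->premise). *)
Inductive env_step {I : Type} : env I -> env I -> Prop :=
| es_perm : forall G D, Permutation G D -> env_step G D
| es_contr : forall G u T T1 T2, tsplit T T1 T2 ->
    env_step ((u, T) :: G) ((u, T1) :: (u, T2) :: G)
| es_weak : forall G u T, env_step ((u, T) :: G) G
| es_sub : forall G u T1 T2, subty T1 T2 ->
    env_step ((u, T1) :: G) ((u, T2) :: G)
| es_rev : forall G u Ts1 Ts2,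
    env_step ((u, TChan Ts1 (Bullet 0)) :: G) ((u, TChan Ts2 (Bullet 0)) :: G).

Definition derivable {I : Type} (G D : env I) : Prop :=
  clos_refl_trans (env I) env_step G D.

Definition partial_fun {I : Type} (G : env I) : Prop := NoDup (map fst G).

Definition consistent {I : Type} (D : env I) : Prop :=
  exists G, partial_fun G /\ derivable G D.

(* Usage decrement of an attribute: None = undefined (a = bullet_0);
   Some None = the assumption disappears (a = aff);
   Some (Some a') = the assumption becomes [T]^{a'}. *)
Definition attr_dec (a : attr) : option (option attr) :=
  match a with
  | Aff => Some None
  | Un => Some (Some Un)
  | Bullet 0 => None
  | Bullet (S i) => Some (Some (Bullet i))
  end.

Definition ext_dec {I : Type} (G : env I) (u : I) (Ts : list ty)
  (o : option attr) : env I :=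
  match o with
  | None => G
  | Some a => G ++ [(u, TChan Ts a)]
  end.

From Pilot Require Import Defs.
(* Contraction is the only structural rule that puts a second assumption on an
   identifier, and it splits [un] into [un, un] or [bullet_i] into
   [aff, bullet_(i+1)].  Starting from a partial function, every derivable
   environment therefore satisfies two invariants: a [bullet_i] assumption on
   [u] coexists only with [aff] assumptions on [u], and then [i > 0]; and an
   [aff, bullet_(i+1)] pair on [u] can be replaced by [bullet_i] without
   leaving the derivable environments, because the pair descends from a split
   of some [bullet_k], [k <= i+1], whose later history can be replayed on the
   merged assumption.  So two assumptions on [u] are either [un, un] or
   contain an [aff]; the decrement weakens the [aff] away, keeps [un], and
   merges [aff, bullet_(i+1)] into [bullet_i]. *)
From Stdlib Require Import List Permutation Relations Lia.
Import ListNotations.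

Section PermutationPairs.
Context {A : Type}.

Lemma Permutation_cons_cases {x a : A} {Y X} :
  Permutation (x :: Y) (a :: X) ->
  (x = a /\ Permutation Y X) \/
  exists X', Permutation X (x :: X') /\ Permutation Y (a :: X').
Proof.
  intros H.
  assert (Hx : In x (a :: X)) by (apply (Permutation_in x H); left; reflexivity).
  destruct Hx as [<- | Hx].
  - left. split; [reflexivity | exact (Permutation_cons_inv H)].
  - right. destruct (in_split _ _ Hx) as [X1 [X2 ->]].
    exists (X1 ++ X2). split.
    + apply Permutation_sym, Permutation_middle.
    + exact (Permutation_cons_app_inv (a :: X1) X2 H).
Qed.

Lemma Permutation_cons_pair_cases {x a b : A} {Y X} :
  Permutation (x :: Y) (a :: b :: X) ->
  (x = a /\ Permutation Y (b :: X)) \/ (x = b /\ Permutation Y (a :: X)) \/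
  exists X', Permutation X (x :: X') /\ Permutation Y (a :: b :: X').
Proof.
  intros H.
  destruct (Permutation_cons_cases H) as [[<- HY] | [X' [HX HY]]].
  { left. split; [reflexivity | exact HY]. }
  right. destruct (Permutation_cons_cases (Permutation_sym HX))
    as [[<- HX'] | [X'' [HX' HX'']]].
  - left. split; [reflexivity|]. exact (perm_trans HY (perm_skip a HX')).
  - right. exists X''. split; [exact HX'|].
    exact (perm_trans HY (perm_skip a HX'')).
Qed.

Lemma Permutation_cons_pair_frame {x a b : A} {Y X} :
  Permutation Y (a :: b :: X) -> Permutation (x :: Y) (a :: b :: x :: X).
Proof. intros H. exact (perm_trans (perm_skip x H) (Permutation_middle [a; b] X x)). Qed.

End PermutationPairs.

Lemma attr_sub_bullet_inv {a i} : attr_sub a (Bullet i) -> exists k, a = Bullet k /\ k <= i.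
Proof.
  intros H. remember (Bullet i) as x eqn:Ex. revert i Ex.
  induction H as [a b Hab | a | a b c _ IHab _ IHbc]; intros i ->.
  - inversion Hab; subst. exists i0. split; [reflexivity | lia].
  - exists i. split; [reflexivity | lia].
  - destruct (IHbc i eq_refl) as [k [-> Hk]].
    destruct (IHab k eq_refl) as [k' [-> Hk']].
    exists k'. split; [reflexivity | lia].
Qed.

Lemma attr_sub_aff_inv {a} : attr_sub Aff a -> a = Aff.
Proof.
  intros H. remember Aff as x eqn:Ex. revert Ex.
  induction H as [a b Hab | a | a b c _ IHab _ IHbc]; intros Ea; subst.
  - inversion Hab.
  - reflexivity.
  - specialize (IHab eq_refl). subst. exact (IHbc eq_refl).
Qed.

Lemma attr_sub_bullet k i : k <= i -> attr_sub (Bullet k) (Bullet i).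
Proof.
  induction 1 as [| i _ IH].
  - apply rt_refl.
  - exact (rt_trans _ _ _ _ _ IH (rt_step _ _ _ _ (Defs.le_bb i))).
Qed.

Section Environments.
Context {I : Type}.
Implicit Types (G D X Y : env I) (u v : I).

Lemma partial_fun_no_pair {G X u T T'} :
  partial_fun G -> ~ Permutation G ((u, T) :: (u, T') :: X).
Proof.
  intros HG HP. apply (Permutation_map fst) in HP.
  apply (Permutation_NoDup HP) in HG. inversion HG as [| ? ? Hu _].
  apply Hu. left. reflexivity.
Qed.

Lemma derivable_perm {G D D'} : derivable G D -> Permutation D D' -> derivable G D'.
Proof. intros H P. exact (rt_trans _ _ _ _ _ H (rt_step _ _ _ _ (es_perm _ _ P))). Qed.

Lemma derivable_step {G D D'} : derivable G D -> env_step D D' -> derivable G D'.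
Proof. intros H S. exact (rt_trans _ _ _ _ _ H (rt_step _ _ _ _ S)). Qed.

Lemma derivable_step_under {G y x L X} :
  (forall R, env_step (x :: R) (L ++ R)) ->
  derivable G (y :: x :: X) -> derivable G (y :: L ++ X).
Proof.
  intros Hstep H.
  assert (Hswap : derivable G (x :: y :: X)) by exact (derivable_perm H (perm_swap _ _ _)).
  apply (derivable_perm (derivable_step Hswap (Hstep (y :: X)))).
  apply Permutation_sym, Permutation_middle.
Qed.

Definition bullet_shares_aff D : Prop :=
  forall X u Ts Ts' i a,
  Permutation D ((u, TChan Ts (Bullet i)) :: (u, TChan Ts' a) :: X) ->
  a = Aff /\ i <> 0.

Lemma bullet_shares_aff_step {D0 D} :
  bullet_shares_aff D0 -> env_step D0 D -> bullet_shares_aff D.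
Proof.
  intros IH St X u Ts Ts' i a H.
  destruct St as [D0 D1 P | Y v T T1 T2 Hs | Y v T | Y v T1 T2 Hs | Y v Ts1 Ts2].
  - exact (IH _ u Ts Ts' i a (perm_trans P H)).
  - apply Permutation_cons_pair_cases in H as [[E H] | [[E H] | [X' [_ H]]]].
    + inversion E; subst. inversion Hs.
    + inversion E; subst.
      apply Permutation_cons_cases in H as [[E2 H] | [X' [_ H]]].
      * inversion E2; subst. inversion Hs; subst. split; [reflexivity | lia].
      * inversion Hs; subst;
          destruct (IH _ u Ts Ts' i _ (perm_trans (perm_skip _ H) (perm_swap _ _ _))) as [C _];
          discriminate.
    + apply Permutation_cons_pair_cases in H as [[E H] | [[E H] | [X'' [_ H]]]].
      * inversion E; subst. inversion Hs; subst.
        destruct (IH _ u Ts Ts' i0 a (perm_skip _ H)) as [C _]. split; [exact C | lia].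
      * inversion E; subst. inversion Hs; subst;
          destruct (IH _ u Ts Ts' i _ (perm_trans (perm_skip _ H) (perm_swap _ _ _))) as [C _];
          discriminate.
      * exact (IH _ u Ts Ts' i a (Permutation_cons_pair_frame H)).
  - exact (IH _ u Ts Ts' i a (Permutation_cons_pair_frame H)).
  - destruct Hs as [Ts0 a1 a2 Ha].
    apply Permutation_cons_pair_cases in H as [[E H] | [[E H] | [X' [_ H]]]].
    + inversion E; subst. destruct (attr_sub_bullet_inv Ha) as [k [-> Hk]].
      destruct (IH _ u Ts Ts' k a (perm_skip _ H)) as [C1 C2]. split; [exact C1 | lia].
    + inversion E; subst.
      destruct (IH _ u Ts Ts' i a1 (perm_trans (perm_skip _ H) (perm_swap _ _ _))) as [-> C].
      split; [exact (attr_sub_aff_inv Ha) | exact C].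
    + exact (IH _ u Ts Ts' i a (Permutation_cons_pair_frame H)).
  - apply Permutation_cons_pair_cases in H as [[E H] | [[E H] | [X' [_ H]]]].
    + inversion E; subst.
      destruct (IH _ u Ts1 Ts' 0 a (perm_skip _ H)) as [_ C]. contradiction.
    + inversion E; subst.
      destruct (IH _ u Ts Ts1 i (Bullet 0) (perm_trans (perm_skip _ H) (perm_swap _ _ _)))
        as [C _]. discriminate.
    + exact (IH _ u Ts Ts' i a (Permutation_cons_pair_frame H)).
Qed.

Lemma derivable_bullet_shares_aff {G D} :
  partial_fun G -> derivable G D -> bullet_shares_aff D.
Proof.
  intros HG H. apply clos_rt_rtn1 in H.
  induction H as [| D0 D St _ IH].
  - intros X u Ts Ts' i a P. exfalso. exact (partial_fun_no_pair HG P).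
  - exact (bullet_shares_aff_step IH St).
Qed.

Definition aff_bullet_mergeable G D : Prop :=
  forall X u Ts i,
  Permutation D ((u, TChan Ts Aff) :: (u, TChan Ts (Bullet (S i))) :: X) ->
  derivable G ((u, TChan Ts (Bullet i)) :: X).

Lemma aff_bullet_mergeable_step {G D0 D} :
  derivable G D0 -> bullet_shares_aff D0 -> aff_bullet_mergeable G D0 ->
  env_step D0 D -> aff_bullet_mergeable G D.
Proof.
  intros Hd Hinv IH St X u Ts i H.
  destruct St as [D0 D1 P | Y v T T1 T2 Hs | Y v T | Y v T1 T2 Hs | Y v Ts1 Ts2].
  - exact (IH _ u Ts i (perm_trans P H)).
  - apply Permutation_cons_pair_cases in H as [[E H] | [[E H] | [X' [HX H]]]].
    + inversion E; subst. inversion Hs; subst.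
      apply Permutation_cons_cases in H as [[E2 H] | [X' [_ H]]].
      * inversion E2; subst. exact (derivable_perm Hd (perm_skip _ H)).
      * destruct (Hinv _ u Ts Ts i0 _ (perm_skip _ H)) as [C _]. discriminate.
    + inversion E; subst. inversion Hs.
    + apply Permutation_cons_pair_cases in H as [[E H] | [[E H] | [X'' [HX' H]]]].
      * inversion E; subst. inversion Hs.
      * inversion E; subst. inversion Hs; subst.
        apply (derivable_perm Hd), perm_skip.
        exact (perm_trans H (Permutation_sym HX)).
      * apply (derivable_perm (derivable_step_under (L := [(v, T1); (v, T2)])
          (fun R => es_contr R v T T1 T2 Hs)
          (IH _ u Ts i (Permutation_cons_pair_frame H)))), perm_skip.
        exact (Permutation_sym (perm_trans HX (perm_skip _ HX'))).
  - exact (derivable_step_under (L := []) (fun R => es_weak R v T)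
      (IH _ u Ts i (Permutation_cons_pair_frame H))).
  - destruct Hs as [Ts0 a1 a2 Ha].
    apply Permutation_cons_pair_cases in H as [[E H] | [[E H] | [X' [HX H]]]].
    + inversion E; subst.
      destruct (Hinv _ u Ts Ts (S i) a1 (perm_trans (perm_skip _ H) (perm_swap _ _ _)))
        as [-> _].
      exact (IH _ u Ts i (perm_skip _ H)).
    + inversion E; subst. destruct (attr_sub_bullet_inv Ha) as [k [-> Hk]].
      destruct (PeanoNat.Nat.eq_dec k (S i)) as [-> | Hne].
      * exact (IH _ u Ts i (perm_trans (perm_skip _ H) (perm_swap _ _ _))).
      * assert (Hd' : derivable G ((u, TChan Ts Aff) :: (u, TChan Ts (Bullet k)) :: X))
          by exact (derivable_perm Hd (perm_trans (perm_skip _ H) (perm_swap _ _ _))).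
        apply (derivable_step (derivable_step Hd' (es_weak _ _ _))), es_sub, subty_chan.
        apply attr_sub_bullet. lia.
    + apply (derivable_perm (derivable_step_under (L := [(v, TChan Ts0 a2)])
        (fun R => es_sub R v _ _ (subty_chan Ts0 a1 a2 Ha))
        (IH _ u Ts i (Permutation_cons_pair_frame H)))), perm_skip.
      exact (Permutation_sym HX).
  - apply Permutation_cons_pair_cases in H as [[E H] | [[E H] | [X' [HX H]]]];
      try (inversion E; fail).
    apply (derivable_perm (derivable_step_under (L := [(v, TChan Ts2 (Bullet 0))])
      (fun R => es_rev R v Ts1 Ts2)
      (IH _ u Ts i (Permutation_cons_pair_frame H)))), perm_skip.
    exact (Permutation_sym HX).
Qed.

Lemma derivable_aff_bullet_mergeable {G D} :
  partial_fun G -> derivable G D -> aff_bullet_mergeable G D.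
Proof.
  intros HG H. apply clos_rt_rtn1 in H.
  induction H as [| D0 D St HD0 IH].
  - intros X u Ts i P. exfalso. exact (partial_fun_no_pair HG P).
  - apply clos_rtn1_rt in HD0.
    exact (aff_bullet_mergeable_step HD0 (derivable_bullet_shares_aff HG HD0) IH St).
Qed.

Lemma pair_attrs_aff_or_un {G X u Ts a1 a2} :
  partial_fun G -> derivable G ((u, TChan Ts a1) :: (u, TChan Ts a2) :: X) ->
  a1 = Aff \/ a2 = Aff \/ (a1 = Un /\ a2 = Un).
Proof.
  intros HG H. pose proof (derivable_bullet_shares_aff HG H) as Hinv.
  destruct a1 as [| | i1]; destruct a2 as [| | i2]; auto;
    first [ destruct (Hinv _ _ _ _ _ _ (Permutation_refl _)) as [C _]
          | destruct (Hinv _ _ _ _ _ _ (perm_swap _ _ _)) as [C _] ];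
    discriminate.
Qed.

Lemma aff_pair_decrement {G X u Ts a} :
  partial_fun G -> derivable G ((u, TChan Ts Aff) :: (u, TChan Ts a) :: X) ->
  exists o, attr_dec a = Some o /\ derivable G (ext_dec X u Ts o).
Proof.
  intros HG H. destruct a as [| | [| j]].
  - exists None. split; [reflexivity|].
    exact (derivable_step (derivable_step H (es_weak _ _ _)) (es_weak _ _ _)).
  - exists (Some Un). split; [reflexivity|].
    exact (derivable_perm (derivable_step H (es_weak _ _ _)) (Permutation_cons_append _ _)).
  - destruct (derivable_bullet_shares_aff HG H _ _ _ _ _ _ (perm_swap _ _ _)) as [_ C].
    contradiction.
  - exists (Some (Bullet j)). split; [reflexivity|].
    exact (derivable_perm (derivable_aff_bullet_mergeable HG H _ _ _ _ (Permutation_refl _))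
      (Permutation_cons_append _ _)).
Qed.

End Environments.

Theorem mainTheorem1 (I : Type) (G G' : env I) (u : I) (Ts : list ty)
  (a1 a2 : attr) :
  partial_fun G' ->
  derivable G' (G ++ [(u, TChan Ts a1); (u, TChan Ts a2)]) ->
  exists o1 o2,
    attr_dec a1 = Some o1 /\ attr_dec a2 = Some o2 /\
    derivable G' (ext_dec (ext_dec G u Ts o1) u Ts o2) /\
    consistent (ext_dec (ext_dec G u Ts o1) u Ts o2).
Proof.
  intros HG H.
  assert (Hpair : derivable G' ((u, TChan Ts a1) :: (u, TChan Ts a2) :: G))
    by exact (derivable_perm H (Permutation_app_comm G _)).
  assert (Hdec : exists o1 o2, attr_dec a1 = Some o1 /\ attr_dec a2 = Some o2 /\
                   derivable G' (ext_dec (ext_dec G u Ts o1) u Ts o2)).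
  { destruct (pair_attrs_aff_or_un HG Hpair) as [-> | [-> | [-> ->]]].
    - destruct (aff_pair_decrement HG Hpair) as [o [Eo Ho]].
      exists None, o. auto.
    - destruct (aff_pair_decrement HG (derivable_perm Hpair (perm_swap _ _ _)))
        as [o [Eo Ho]].
      exists o, None. auto.
    - exists (Some Un), (Some Un). simpl. rewrite <- app_assoc. auto. }
  destruct Hdec as [o1 [o2 [E1 [E2 Hd]]]].
  exists o1, o2. repeat split; try assumption.
  exists G'. split; assumption.
Qed.
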